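(* Let $G$ be a finite nonabelian group. Then $U(G)\le G'\cap Z(G)\le G'Z(G)\le V(G)$.
   Context: For a normal subgroup $H$ of $G$, $\mathrm{Irr}(G\mid H)$ is the set of $\chi\in\mathrm{Irr}(G)$ with $H\not\le\ker(\chi)$, and $V(G\mid H)$ is the subgroup generated by all $g\in G$ such that $\chi(g)\ne0$ for some $\chi\in\mathrm{Irr}(G\mid H)$. For a normal subgroup $N$, $U(G\mid N)$ is the product of all normal subgroups $H$ of $G$ with $V(G\mid H)\le N$, and $U(G)=U(G\mid Z(G))$. $V(G)$ is the subgroup generated by all $g\in G$ such that $\chi(g)\neq 0$ for some nonlinear $\chi\in\mathrm{Irr}(G)$ (equivalently $V(G)=V(G\mid G')$). *)

From mathcomp Require Import all_boot all_order all_algebra all_fingroup all_solvable all_field all_character.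
Set Implicit Arguments. Unset Strict Implicit. Unset Printing Implicit Defensive.
Import GroupScope GRing.Theory Num.Theory.
Local Open Scope ring_scope.

Section Defs.
Variable gT : finGroupType.

Definition Irr_rel (G H : {group gT}) : pred (Iirr G) :=
  fun i => ~~ (H \subset cfker 'chi[G]_i).

Definition Vrel (G H : {group gT}) : {set gT} :=
  <<[set g in G | [exists i : Iirr G, @Irr_rel G H i && ('chi[G]_i g != 0)]]>>.

Definition Urel (G N : {group gT}) : {set gT} :=
  <<\bigcup_(H : {group gT} | (H <| G) && (Vrel G H \subset N)) H>>.

Definition Ugrp (G : {group gT}) : {set gT} := Urel G 'Z(G)%G.

Definition Vgrp (G : {group gT}) : {set gT} :=
  <<[set g in G | [exists i : Iirr G,
       (~~ ('chi[G]_i \is a linear_char)) && ('chi[G]_i g != 0)]]>>.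
End Defs.
Arguments Irr_rel {gT} G H i.

From mathcomp Require Import all_boot all_order all_algebra all_fingroup all_solvable all_field all_character.
Import GroupScope GRing.Theory Num.Theory.
Local Open Scope ring_scope.

(* For H normal in G and 1 <> g in H, second orthogonality at (g, 1) gives
   sum_chi chi(g) chi(1) = 0; the characters with H in their kernel contribute
   chi(1)^2 >= 0, the trivial one 1 > 0, so some chi in Irr(G|H) does not
   vanish at g. Hence H <= V(G|H), which gives U(G|N) <= N, and, as
   Irr(G|G') is the set of nonlinear characters, G' <= V(G). A linear
   character vanishes nowhere, so V(G|H) = G whenever H is not in G', giving
   U(G) <= G' for G nonabelian. Finally irreducible characters vanish nowhere
   on Z(G), and a nonabelian group has a nonlinear one, so Z(G) <= V(G). *)

Section VanishingSets.

Variables (gT : finGroupType) (G : {group gT}).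

Lemma Irr_rel_neq0 [H : {group gT}] [g] :
  H <| G -> g \in H -> g != 1%g -> exists2 i, Irr_rel G H i & 'chi[G]_i g != 0.
Proof.
move=> nsHG Hg ntg; have Gg := subsetP (normal_sub nsHG) g Hg.
apply/exists_inP; apply: contraT => /exists_inPn vanish.
have := second_orthogonality_relation g (group1 G).
rewrite class1G inE (negbTE ntg) mulr0n (bigID (Irr_rel G H)) /=.
rewrite big1 ?add0r => [sum0 | i relHi]; last first.
  by move/vanish/negbNE/eqP: relHi => ->; rewrite mul0r.
have kerH_term i : ~~ Irr_rel G H i -> 'chi_i g * ('chi_i 1%g)^* = 'chi_i 1%g ^+ 2.
  rewrite negbK => /subsetP/(_ g Hg) ker_g.
  by rewrite -(mulg1 g) (cfkerMl _ ker_g) conj_natr ?Cnat_irr1 // expr2.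
have term_ge0 i : ~~ Irr_rel G H i -> 0 <= 'chi_i g * ('chi_i 1%g)^*.
  by move=> kerHi; rewrite kerH_term // exprn_ge0 // natr_ge0 // Cnat_irr1.
have kerH0 : ~~ Irr_rel G H 0 by rewrite negbK irr0 cfker_cfun1 normal_sub.
have /eqP := psumr_eq0P term_ge0 sum0 kerH0.
by rewrite kerH_term // irr0 cfun11 expr1n oner_eq0.
Qed.

Lemma normal_sub_Vrel [H : {group gT}] : H <| G -> H \subset Vrel G H.
Proof.
move=> nsHG; apply/subsetP => g Hg.
have [-> | ntg] := eqVneq g 1%g; first exact: group1.
have [i relHi chi_g] := Irr_rel_neq0 nsHG Hg ntg.
apply: mem_gen; rewrite inE (subsetP (normal_sub nsHG)) //=.
by apply/existsP; exists i; rewrite relHi.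
Qed.

Lemma Vgrp_Vrel_der1 : Vgrp G = Vrel G G^`(1)%g.
Proof.
congr <<_>>; apply/setP => g; rewrite !inE; congr (_ && _).
by apply: eq_existsb => i; rewrite /Irr_rel lin_irr_der1.
Qed.

Lemma der1_sub_Vgrp : G^`(1)%g \subset Vgrp G.
Proof. by rewrite Vgrp_Vrel_der1 normal_sub_Vrel ?der_normal. Qed.

Lemma irr_center_neq0 i z : z \in 'Z(G) -> 'chi[G]_i z != 0.
Proof.
move=> Zz; have Gz := subsetP (center_sub G) z Zz.
have : z \in 'Z('chi[G]_i)%CF.
  by rewrite -cap_cfcenter_irr in Zz; move/bigcapP: Zz; apply.
rewrite irr_cfcenterE //; apply: contraL => /eqP ->.
by rewrite normr0 eq_sym irr1_neq0.
Qed.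

Lemma center_sub_Vgrp : ~~ abelian G -> 'Z(G) \subset Vgrp G.
Proof.
move=> nabG; have [i nlin_i] : exists i, ~~ ('chi[G]_i \is a linear_char).
  apply/existsP; apply: contraR nabG => /existsPn all_lin.
  by apply/char_abelianP => i; apply/negbNE.
apply/subsetP => z Zz; apply: mem_gen; rewrite inE (subsetP (center_sub G)) //=.
by apply/existsP; exists i; rewrite nlin_i irr_center_neq0.
Qed.

Lemma lin_Irr_rel_sub_Vrel [H : {group gT}] [i] :
  'chi[G]_i \is a linear_char -> Irr_rel G H i -> G \subset Vrel G H.
Proof.
move=> lin_i relHi; apply/subsetP => g Gg; apply: mem_gen.
by rewrite inE Gg /=; apply/existsP; exists i; rewrite relHi lin_char_neq0.
Qed.

Lemma exists_lin_Irr_rel (H : {group gT}) :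
  ~~ (H \subset G^`(1)%g) -> exists2 i, 'chi[G]_i \is a linear_char & Irr_rel G H i.
Proof.
move=> not_sHD; apply/exists_inP; apply: contraR not_sHD => /exists_inPn sH_ker.
by rewrite -cap_cfker_lin_irr; apply/bigcapsP => i /sH_ker/negbNE.
Qed.

Lemma Urel_sub (N : {group gT}) : Urel G N \subset N.
Proof.
rewrite gen_subG; apply/bigcupsP => H /andP[nsHG sVN].
exact: subset_trans (normal_sub_Vrel nsHG) sVN.
Qed.

Lemma Urel_sub_der1 (N : {group gT}) : ~~ (G \subset N) -> Urel G N \subset G^`(1)%g.
Proof.
move=> not_sGN; rewrite gen_subG; apply/bigcupsP => H /andP[_ sVN].
apply: contraR not_sGN => /exists_lin_Irr_rel[i lin_i relHi].
exact: subset_trans (lin_Irr_rel_sub_Vrel lin_i relHi) sVN.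
Qed.

End VanishingSets.

Local Close Scope ring_scope.

Theorem lemma6p2 (gT : finGroupType) (G : {group gT}) :
  ~~ abelian G ->
  [/\ Ugrp G \subset G^`(1) :&: 'Z(G),
      G^`(1) :&: 'Z(G) \subset G^`(1) * 'Z(G)
    & G^`(1) * 'Z(G) \subset Vgrp G].
Proof.
move=> nabG; split.
- have not_sGZ : ~~ (G \subset 'Z(G)) by rewrite subsetI subxx.
  by rewrite subsetI Urel_sub andbT; apply: Urel_sub_der1.
- exact: subset_trans (subsetIl _ _) (mulG_subl _ _).
- by rewrite mul_subG ?der1_sub_Vgrp ?center_sub_Vgrp.
Qed.
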